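(* Let $G$ be a connected graph. The following are equivalent: (1) $G$ is bipartite; (2) $P_2\mid G$; (3) $G$ is not strongly disjoint from $P_2$; (4) $G$ is not weakly disjoint from $P_2$.
   Context: A weight function on finite $U$ is $\alpha:U\times U\to\mathbb{R}$, $\alpha\ge0$, symmetric, summing to $1$; degree $p(u)=\sum_{u'}\alpha(u,u')$; a graph is $(U,\alpha)$ with edges $(u,u')$ where $\alpha(u,u')>0$; connected means any two distinct vertices are joined by a path of edges; bipartite means $U=U_1\sqcup U_2$ with every edge joining $U_1$ to $U_2$. $P_2$ is the graph on $\{v_1,v_2\}$ with $\beta(v_1,v_2)=\beta(v_2,v_1)=1/2$, $\beta(v_i,v_i)=0$. For graphs $G=(U,\alpha)$, $H=(V,\beta)$ with degrees $p,q$, $H\mid G$ means there is a surjective $\phi:U\to V$ with (i) $q(v)=\sum_{u\in\phi^{-1}(v)}p(u)$, and (ii) $q(v)\sum_{u'\in\phi^{-1}(v')}\alpha(u,u')=p(u)\beta(v,v')$ for all $v,v'$, $u\in\phi^{-1}(v)$. A weight joining of $\alpha,\beta$ is a weight function $\gamma$ on $U\times V$ with degree $r(u,v)=\sum_{(u',v')}\gamma((u,v),(u',v'))$ such that $\sum_v r(u,v)=p(u)$, $\sum_u r(u,v)=q(v)$, $p(u)\sum_{\tilde v}\gamma((u,v),(u',\tilde v))=\alpha(u,u')r(u,v)$ and $q(v)\sum_{\tilde u}\gamma((u,v),(\tilde u,v'))=\beta(v,v')r(u,v)$. Strongly disjoint: the only weight joining is $\alpha\otimes\beta$, $(\alpha\otimes\beta)((u,v),(u',v'))=\alpha(u,u')\beta(v,v')$;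 weakly disjoint: every weight joining has degree $r(u,v)=p(u)q(v)$. *)

From HB Require Import structures.
From mathcomp Require Import all_boot all_order all_algebra.
Set Implicit Arguments. Unset Strict Implicit. Unset Printing Implicit Defensive.
Import Order.TTheory GRing.Theory Num.Theory.
Local Open Scope ring_scope.

Section Defs.
Variable R : realFieldType.

Definition weight_fun (U : finType) (alpha : U -> U -> R) : Prop :=
  [/\ forall u u', 0 <= alpha u u',
      forall u u', alpha u u' = alpha u' u
    & \sum_(u : U) \sum_(u' : U) alpha u u' = 1].

Definition deg (U : finType) (alpha : U -> U -> R) (u : U) : R :=
  \sum_(u' : U) alpha u u'.

Definition edge (U : finType) (alpha : U -> U -> R) : rel U :=
  fun u u' => 0 < alpha u u'.

Definition connected_graph (U : finType) (alpha : U -> U -> R) : Prop :=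
  forall u v : U, u != v ->
    exists s : seq U, path (edge alpha) u s /\ last u s = v.

(* bipartite: U = U1 ⊔ U2 (U2 = complement of U1) with every edge
   joining U1 to U2 *)
Definition bipartite (U : finType) (alpha : U -> U -> R) : Prop :=
  exists U1 : {set U}, forall u u', edge alpha u u' ->
    (u \in U1) != (u' \in U1).

(* the graph P_2 on {v1, v2} (encoded as bool) *)
Definition P2 (v v' : bool) : R := if v != v' then 1 / 2 else 0.

Definition gdivides (V U : finType) (beta : V -> V -> R) (alpha : U -> U -> R)
  : Prop :=
  exists phi : U -> V,
    [/\ forall v : V, exists u : U, phi u = v,
        forall v : V, deg beta v = \sum_(u | phi u == v) deg alpha u
      & forall (v v' : V) (u : U), phi u = v ->
          deg beta v * (\sum_(u' | phi u' == v') alpha u u')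
            = deg alpha u * beta v v'].

Definition weight_joining (U V : finType) (alpha : U -> U -> R)
  (beta : V -> V -> R) (gamma : (U * V)%type -> (U * V)%type -> R) : Prop :=
  [/\ weight_fun gamma,
      forall u : U, \sum_(v : V) deg gamma (u, v) = deg alpha u,
      forall v : V, \sum_(u : U) deg gamma (u, v) = deg beta v,
      forall (u u' : U) (v : V),
        deg alpha u * (\sum_(vt : V) gamma (u, v) (u', vt))
          = alpha u u' * deg gamma (u, v)
    & forall (u : U) (v v' : V),
        deg beta v * (\sum_(ut : U) gamma (u, v) (ut, v'))
          = beta v v' * deg gamma (u, v)].

Definition tensor (U V : finType) (alpha : U -> U -> R) (beta : V -> V -> R)
  (x y : (U * V)%type) : R := alpha x.1 y.1 * beta x.2 y.2.

Definition strongly_disjoint (U V : finType) (alpha : U -> U -> R)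
  (beta : V -> V -> R) : Prop :=
  forall gamma, weight_joining alpha beta gamma ->
    forall x y, gamma x y = tensor alpha beta x y.

Definition weakly_disjoint (U V : finType) (alpha : U -> U -> R)
  (beta : V -> V -> R) : Prop :=
  forall gamma, weight_joining alpha beta gamma ->
    forall (u : U) (v : V), deg gamma (u, v) = deg alpha u * deg beta v.

End Defs.

From HB Require Import structures.
From mathcomp Require Import all_boot all_order all_algebra.
From mathcomp Require Import ring lra.
From Stdlib Require Import Classical.
Set Implicit Arguments. Unset Strict Implicit. Unset Printing Implicit Defensive.
Import Order.TTheory GRing.Theory Num.Theory.
Local Open Scope ring_scope.

(* A bipartition of G maps G onto P2, each side carrying weight 1/2, and the
   joining supported on the graph of such a factor map is not a product.
   Conversely, let gamma be a weight joining of alpha and P2.  As P2 has no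
   loops, gamma only joins (u, v) to (u', ~~ v), and the conditional weight
   f u = r(u, true) / p(u) satisfies f u' = 1 - f u along every edge.  On a
   connected graph, either f <> 1/2 everywhere and {f > 1/2} is a
   bipartition, or f = 1/2 everywhere, which forces gamma = alpha (x) P2. *)

Section Joinings.
Variable R : realFieldType.

Section NonnegativeWeight.
Variables (U : finType) (alpha : U -> U -> R).
Hypothesis alpha_ge0 : forall u u', 0 <= alpha u u'.

Lemma deg_ge0 u : 0 <= deg alpha u.
Proof. exact: sumr_ge0. Qed.

Lemma weight_le_deg u u' : alpha u u' <= deg alpha u.
Proof. by rewrite /deg (bigD1 u') //= lerDl sumr_ge0. Qed.

Lemma edge_deg_gt0 u u' : edge alpha u u' -> 0 < deg alpha u.
Proof. by move=> /lt_le_trans; apply; apply: weight_le_deg. Qed.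

End NonnegativeWeight.

Lemma weight_fun_edge (U : finType) (alpha : U -> U -> R) :
  weight_fun alpha -> exists u u', edge alpha u u'.
Proof.
case=> alpha_ge0 _ alpha_sum1.
have [|u /= deg_gt0] :=
  @psumr_neq0P _ _ xpredT (deg alpha) (fun u _ => deg_ge0 alpha_ge0 u).
  by rewrite alpha_sum1; apply/eqP; rewrite oner_eq0.
have [|u' /= alpha_gt0] := @psumr_neq0P _ _ xpredT (alpha u) (fun u' _ => alpha_ge0 u u').
  by apply/eqP; rewrite lt0r_neq0.
by exists u, u'.
Qed.

Lemma strongly_disjoint_weakly (U V : finType) (alpha : U -> U -> R)
    (beta : V -> V -> R) :
  strongly_disjoint alpha beta -> weakly_disjoint alpha beta.
Proof.
move=> strong gamma jgamma u v; rewrite /deg.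
under eq_bigr => y _ do rewrite strong //.
rewrite /tensor -(pair_bigA _ (fun i j => alpha u i * beta v j)) big_distrl /=.
by apply: eq_bigr => i _; rewrite big_distrr.
Qed.

Lemma sum_pair (U V : finType) (F : U * V -> R) :
  \sum_x F x = \sum_u \sum_v F (u, v).
Proof. by rewrite pair_bigA; apply: eq_bigr => -[]. Qed.

Section GraphJoining.
Variables (U V : finType) (alpha : U -> U -> R) (beta : V -> V -> R).
Variable phi : U -> V.

Definition graph_joining (x y : U * V) : R :=
  if (x.2 == phi x.1) && (y.2 == phi y.1) then alpha x.1 y.1 else 0.

Lemma deg_graph_joining u v :
  deg graph_joining (u, v) = if v == phi u then deg alpha u else 0.
Proof.
rewrite /deg sum_pair /graph_joining /=; case: eqP => _ /=.
  apply: eq_bigr => u' _.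
  by rewrite (bigD1 (phi u')) //= eqxx big1 ?addr0 // => v' /negbTE ->.
by rewrite big1 // => u' _; rewrite big1.
Qed.

Lemma sum_deg_graph_joining u : \sum_v deg graph_joining (u, v) = deg alpha u.
Proof.
rewrite (bigD1 (phi u)) //= deg_graph_joining eqxx big1 ?addr0 //.
by move=> v /negbTE; rewrite deg_graph_joining => ->.
Qed.

Lemma graph_joining_weight_joining :
  weight_fun alpha ->
  (forall v, deg beta v = \sum_(u | phi u == v) deg alpha u) ->
  (forall v v' u, phi u = v ->
     deg beta v * (\sum_(u' | phi u' == v') alpha u u') = deg alpha u * beta v v') ->
  weight_joining alpha beta graph_joining.
Proof.
move=> [alpha_ge0 alpha_sym alpha_sum1] phi_deg phi_trans; split.
- split=> [x y|x y|]; rewrite /graph_joining.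
  + by case: ifP.
  + by rewrite andbC alpha_sym.
  + by rewrite sum_pair -alpha_sum1; apply: eq_bigr => u _; apply: sum_deg_graph_joining.
- exact: sum_deg_graph_joining.
- move=> v; rewrite phi_deg [RHS]big_mkcond; apply: eq_bigr => u _.
  by rewrite deg_graph_joining eq_sym.
- move=> u u' v; rewrite deg_graph_joining /graph_joining /=.
  case: eqP => _ /=; last by rewrite big1 ?mulr0.
  rewrite (bigD1 (phi u')) //= eqxx big1 ?addr0 => [|v' /negbTE -> //].
  exact: mulrC.
- move=> u v v'; rewrite deg_graph_joining /graph_joining /=.
  case: eqP => [->|_] /=; last by rewrite big1 ?mulr0.
  rewrite -big_mkcond /= (eq_bigl (fun u' => phi u' == v')) => [|u'].
    by rewrite phi_trans // mulrC.
  by rewrite eq_sym.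
Qed.

End GraphJoining.

Lemma deg_P2 v : deg (@P2 R) v = 1 / 2.
Proof. by rewrite /deg big_bool /P2; case: v; rewrite /= ?addr0 ?add0r. Qed.

Lemma gdivides_P2_not_weakly_disjoint (U : finType) (alpha : U -> U -> R) :
  weight_fun alpha -> gdivides (@P2 R) alpha -> ~ weakly_disjoint alpha (@P2 R).
Proof.
move=> walpha [phi [_ phi_deg phi_trans]] weak.
have jgamma := graph_joining_weight_joining walpha phi_deg phi_trans.
have [alpha_ge0 _ _] := walpha.
have [u [u' /(edge_deg_gt0 alpha_ge0) deg_gt0]] := weight_fun_edge walpha.
have := weak _ jgamma u (~~ phi u).
by rewrite deg_graph_joining deg_P2; case: (phi u) => /=; lra.
Qed.

Section BipartiteSides.
Variables (U : finType) (alpha : U -> U -> R) (side : U -> bool).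
Hypothesis walpha : weight_fun alpha.
Hypothesis side_edge : forall u u', edge alpha u u' -> side u != side u'.

Let alpha_ge0 : forall u u', 0 <= alpha u u'. Proof. by case: walpha. Qed.

Lemma same_side_weight0 u u' : side u = side u' -> alpha u u' = 0.
Proof.
move=> same; apply/eqP; rewrite eq_le alpha_ge0 andbT leNgt; apply/negP.
by move=> /side_edge; rewrite same eqxx.
Qed.

Lemma sum_weight_side u b :
  \sum_(u' | side u' == b) alpha u u' = if side u == b then 0 else deg alpha u.
Proof.
case: eqP => [<-|side_u].
  by rewrite big1 // => u' /eqP same; apply: same_side_weight0.
rewrite /deg [RHS](bigID (fun u' => side u' == b)) /= [X in _ + X]big1 ?addr0 //.
move=> u' side_u'; apply: same_side_weight0.
by move/eqP: side_u side_u'; case: (side u); case: (side u'); case: b.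
Qed.

Lemma side_deg_half b : \sum_(u | side u == b) deg alpha u = 1 / 2.
Proof.
have [_ alpha_sym alpha_sum1] := walpha.
pose S b := \sum_(u | side u == b) deg alpha u.
have S_flip b' : S b' = S (~~ b').
  have deg_side u : side u == b' -> deg alpha u = \sum_(u' | side u' == ~~ b') alpha u u'.
    by move=> /eqP side_u; rewrite sum_weight_side side_u; case: b' {side_u}.
  rewrite /S (eq_bigr _ deg_side) exchange_big /=; apply: eq_bigr => u' /eqP side_u'.
  under eq_bigr do rewrite alpha_sym.
  by rewrite sum_weight_side side_u'; case: b' {deg_side side_u'}.
have S_sum b' : S b' + S (~~ b') = 1.
  rewrite -alpha_sum1 (bigID (fun u => side u == b')) /=; congr (_ + _).
  by apply: eq_bigl => u; case: b'; case: (side u).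
by have := S_flip b; have := S_sum b; rewrite -/(S b); lra.
Qed.

End BipartiteSides.

Lemma bipartite_gdivides_P2 (U : finType) (alpha : U -> U -> R) :
  weight_fun alpha -> bipartite alpha -> gdivides (@P2 R) alpha.
Proof.
move=> walpha [U1 U1_edge]; exists (fun u => u \in U1); split.
- have [u [u' /U1_edge sides]] := weight_fun_edge walpha.
  move=> v; have [<-|side_u] := eqVneq (u \in U1) v; first by exists u.
  by exists u'; move: sides side_u; case: (u \in U1); case: (u' \in U1); case: v.
- by move=> v; rewrite deg_P2 (side_deg_half walpha U1_edge).
- move=> v v' u <-; rewrite deg_P2 (sum_weight_side walpha U1_edge) /P2.
  by case: (u \in U1); case: v'; rewrite /= ?mulr0 ?mul0r // mulrC.
Qed.

Section JoiningP2.
Variables (U : finType) (alpha : U -> U -> R) (gamma : U * bool -> U * bool -> R).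
Hypothesis walpha : weight_fun alpha.
Hypothesis jgamma : weight_joining alpha (@P2 R) gamma.

Let alpha_ge0 : forall u u', 0 <= alpha u u'. Proof. by case: walpha. Qed.
Let alpha_sym : forall u u', alpha u u' = alpha u' u. Proof. by case: walpha. Qed.

Lemma joining_P2_same_side u v u' : gamma (u, v) (u', v) = 0.
Proof.
have [[gamma_ge0 _ _] _ _ _ P2_trans] := jgamma.
have := P2_trans u v v; rewrite deg_P2 /P2 eqxx /= mul0r => P2_loop.
have sum0 : \sum_ut gamma (u, v) (ut, v) = 0 by lra.
exact: (psumr_eq0P (fun ut _ => gamma_ge0 _ _) sum0).
Qed.

Lemma joining_P2_cross u u' v :
  deg alpha u * gamma (u, v) (u', ~~ v) = alpha u u' * deg gamma (u, v).
Proof.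
have [_ _ _ alpha_trans _] := jgamma.
by rewrite -alpha_trans big_bool; case: v; rewrite /= joining_P2_same_side ?addr0 ?add0r.
Qed.

Lemma deg_joining_P2 u : deg gamma (u, true) + deg gamma (u, false) = deg alpha u.
Proof. by have [_ marginal _ _ _] := jgamma; rewrite -marginal big_bool. Qed.

Definition cond_weight u v := deg gamma (u, v) / deg alpha u.

Lemma cond_weight_edge u u' v :
  edge alpha u u' -> cond_weight u v = gamma (u, v) (u', ~~ v) / alpha u u'.
Proof.
move=> e; have deg_gt0 := edge_deg_gt0 alpha_ge0 e.
apply/eqP; rewrite eqr_div ?lt0r_neq0 //; apply/eqP.
by rewrite mulrC -joining_P2_cross mulrC.
Qed.

Lemma cond_weight_flip u u' :
  edge alpha u u' -> cond_weight u' true = 1 - cond_weight u true.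
Proof.
move=> e; have e' : edge alpha u' u by rewrite /edge alpha_sym.
have [[_ gamma_sym _] _ _ _ _] := jgamma.
have -> : cond_weight u true = cond_weight u' false.
  by rewrite (cond_weight_edge _ e) (cond_weight_edge _ e') gamma_sym alpha_sym.
have := edge_deg_gt0 alpha_ge0 e'; rewrite /cond_weight -(deg_joining_P2 u').
by move=> /lt0r_neq0 deg_neq0; field.
Qed.

Lemma joining_P2_tensor :
  (forall u, cond_weight u true = 1 / 2) ->
  forall x y, gamma x y = tensor alpha (@P2 R) x y.
Proof.
move=> half [u v] [u' v']; rewrite /tensor /=.
have [deg0|deg_neq0] := eqVneq (deg alpha u) 0.
  (* x / 0 = 0, so [half] rules out vertices of degree 0 *)
  by have := half u; rewrite /cond_weight deg0 invr0 mulr0 => ?; lra.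
have deg_half w : deg gamma (u, w) = deg alpha u / 2.
  have deg_true : deg gamma (u, true) = deg alpha u / 2.
    by rewrite -(divfK deg_neq0 (deg gamma _)) -/(cond_weight u true) half; field.
  by case: w => //; have := deg_joining_P2 u; lra.
have [->|v'_ne] := eqVneq v' v; first by rewrite joining_P2_same_side /P2 eqxx mulr0.
have -> : v' = ~~ v by case: v v'_ne; case: v'.
apply: (mulfI deg_neq0); rewrite joining_P2_cross deg_half.
by case: v {v'_ne}; rewrite /P2 /=; field.
Qed.

End JoiningP2.

Lemma connected_graph_invariant (U : finType) (alpha : U -> U -> R) (P : U -> Prop) :
  connected_graph alpha -> (forall u u', edge alpha u u' -> P u -> P u') ->
  forall u u', P u -> P u'.
Proof.
move=> conn P_edge u u'; have [<-//|ne] := eqVneq u u'.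
have [s [path_s <-]] := conn _ _ ne.
elim: s u path_s {ne} => [|x s IH] y //= /andP[e path_s] Py.
exact: IH path_s (P_edge _ _ e Py).
Qed.

Lemma connected_flip_half (U : finType) (alpha : U -> U -> R) (f : U -> R) :
  connected_graph alpha -> (forall u u', edge alpha u u' -> f u' = 1 - f u) ->
  ~ bipartite alpha -> forall u, f u = 1 / 2.
Proof.
move=> conn f_flip not_bip u0; apply: NNPP => f_u0; apply: not_bip.
have flip_ne u1 u2 : edge alpha u1 u2 -> f u1 <> 1 / 2 -> f u2 <> 1 / 2.
  by move=> e f_u1; rewrite (f_flip _ _ e) => f_u2; apply: f_u1; lra.
have f_ne u : f u <> 1 / 2.
  exact: (@connected_graph_invariant _ _ (fun w => f w <> 1 / 2) conn flip_ne u0).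
exists [set u | 1 / 2 < f u] => u u' e; rewrite !inE (f_flip _ _ e).
have -> : (1 / 2 < 1 - f u) = (f u < 1 / 2) by apply/idP/idP => ?; lra.
by have := f_ne u; case: ltgtP => // <-.
Qed.

Lemma not_bipartite_strongly_disjoint_P2 (U : finType) (alpha : U -> U -> R) :
  weight_fun alpha -> connected_graph alpha -> ~ bipartite alpha ->
  strongly_disjoint alpha (@P2 R).
Proof.
move=> walpha conn not_bip gamma jgamma.
exact/(joining_P2_tensor jgamma)/(connected_flip_half conn _ not_bip)/cond_weight_flip.
Qed.

End Joinings.

Unset Implicit Arguments.

Theorem proposition7p1 (R : realFieldType) (U : finType) (alpha : U -> U -> R) :
  weight_fun alpha -> connected_graph alpha ->
  [<-> bipartite alpha;
       gdivides (@P2 R) alpha;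
       ~ strongly_disjoint alpha (@P2 R);
       ~ weakly_disjoint alpha (@P2 R)].
Proof.
move=> walpha conn.
have not_strongly_disjoint_bipartite :
    ~ strongly_disjoint alpha (@P2 R) -> bipartite alpha.
  by move=> not_strong; apply: NNPP => /(not_bipartite_strongly_disjoint_P2 walpha conn).
tfae.
- exact: bipartite_gdivides_P2.
- by move=> /(gdivides_P2_not_weakly_disjoint walpha) not_weak /strongly_disjoint_weakly.
- move=> /not_strongly_disjoint_bipartite /(bipartite_gdivides_P2 walpha).
  exact: gdivides_P2_not_weakly_disjoint.
- by move=> not_weak; apply: not_strongly_disjoint_bipartite => /strongly_disjoint_weakly.
Qed.
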